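(* There exist permutations $\pi$ (one on $n$ keys for infinitely many $n$) such that $\mathrm{LIB}(\pi)=\Theta(\lg\lg n\cdot \mathrm{IB}(\pi))$.
   Context: For a permutation $\pi$ of $n$ keys, let $P$ be a static balanced binary tree whose leaves are the keys of $\pi$ in the order of $\pi$. For each internal vertex $v$ of $P$, list the leaves below $v$ in sorted key order, labeling each L or R according to whether it lies in the left or right subtree of $v$. $\mathrm{IB}(v)$ is the number of switches between L and R, $\mathrm{IB}(\pi)=\sum_v \mathrm{IB}(v)$. With $S(v)$ the decomposition of the labeled sequence into the minimal number of runs of equal labels, $\mathrm{LIB}(v)=\sum_{r\in S(v)}\lg(|r|+1)$ and $\mathrm{LIB}(\pi)=\sum_v\mathrm{LIB}(v)$. *)

From mathcomp Require Import all_boot.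
From Stdlib Require Import Reals.

Set Implicit Arguments.
Unset Strict Implicit.
Unset Printing Implicit Defensive.

Definition lg (x : R) : R := (ln x / ln 2)%R.

(* Internal vertices of the static balanced binary tree whose leaves are the
   entries of s (in the order of s).  Each internal vertex is represented by
   the pair (leaves of left subtree, leaves of right subtree), in tree order.
   A node with m >= 2 leaves puts the first ceil(m/2) leaves on the left and
   the remaining floor(m/2) on the right.  [fuel] only ensures termination;
   fuel = size s is enough. *)
Fixpoint internal_vertices_aux (fuel : nat) (s : seq nat)
  : seq (seq nat * seq nat) :=
  match fuel with
  | 0 => [::]
  | f.+1 =>
    if size s <= 1 then [::]
    else
      let h := uphalf (size s) in
      let L := take h s in
      let Rt := drop h s in
      (L, Rt) :: (internal_vertices_aux f L ++ internal_vertices_aux f Rt)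
  end.

Definition internal_vertices (s : seq nat) := internal_vertices_aux (size s) s.

(* Leaves below v listed in sorted key order, labelled false = L, true = R *)
Definition labels (v : seq nat * seq nat) : seq bool :=
  [seq (k \in v.2) | k <- sort leq (v.1 ++ v.2)].

Fixpoint switches (s : seq bool) : nat :=
  match s with
  | b :: ((c :: _) as t) => (b != c) + switches t
  | _ => 0
  end.

Fixpoint runs_aux (b : bool) (k : nat) (t : seq bool) : seq nat :=
  match t with
  | [::] => [:: k]
  | c :: t' => if c == b then runs_aux b k.+1 t' else k :: runs_aux c 1 t'
  end.

Definition runs (s : seq bool) : seq nat :=
  match s with
  | [::] => [::]
  | b :: t => runs_aux b 1 t
  end.

Definition IB_v (v : seq nat * seq nat) : nat := switches (labels v).

Definition LIB_v (v : seq nat * seq nat) : R :=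
  foldr Rplus 0%R [seq lg (INR r.+1) | r <- runs (labels v)].

Definition IB (pi : seq nat) : nat := sumn [seq IB_v v | v <- internal_vertices pi].

Definition LIB (pi : seq nat) : R :=
  foldr Rplus 0%R [seq LIB_v v | v <- internal_vertices pi].

Definition is_perm_of (n : nat) (pi : seq nat) : bool := perm_eq pi (iota 0 n).

(** The witness on 2^D keys is built by recursion on D.  The sequence for
    2^(d+1) keys is two copies of the sequence for 2^d keys, the left one
    relabelled onto the keys whose bit i = min(t, d) is 0 and the right one
    onto those whose bit i is 1.  Both relabellings are monotone, so the
    subtrees keep their IB and LIB, while the root sees 2^(d+1-i) alternating
    runs of length 2^i: it contributes 2^(d+1-i) - 1 to IB and about i times
    as much to LIB.  Once d >= t every new root has this ratio t, and for
    D = t + 2^(2t) these roots carry almost all of IB and LIB, so that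
    LIB/IB is about t, i.e. about (lg lg n)/2 for n = 2^D. *)

From mathcomp Require Import all_boot zify.
From Stdlib Require Import Reals Lra Psatz.

(* Importing Reals rebinds [^] on nat to [Nat.pow]; restore ssrnat's [expn]. *)
Notation "m ^ n" := (expn m n) : nat_scope.

Lemma internal_vertices_aux_fuel f g s : size s <= f -> size s <= g ->
  internal_vertices_aux f s = internal_vertices_aux g s.
Proof.
elim: f g s => [|f IH] [|g] s /= hf hg //.
- by rewrite (leq_trans hf).
- by rewrite (leq_trans hg).
case: ifP => // s_le1.
have s_gt1 : 1 < size s by rewrite ltnNge s_le1.
have size_take_lt : size (take (uphalf (size s)) s) < size s.
  by rewrite size_take; case: ifP => ?; lia.
have size_drop_lt : size (drop (uphalf (size s)) s) < size s.
  by rewrite size_drop; lia.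
by rewrite (IH g) ?(IH g (drop _ _)) //; lia.
Qed.

Lemma internal_vertices_split s : 1 < size s ->
  internal_vertices s =
  (take (uphalf (size s)) s, drop (uphalf (size s)) s) ::
    (internal_vertices (take (uphalf (size s)) s) ++
     internal_vertices (drop (uphalf (size s)) s)).
Proof.
move=> s_gt1; rewrite /internal_vertices.
have [n E] : exists n, size s = n.+1 by exists (size s).-1; lia.
rewrite [in LHS]E /= ifN -?ltnNge //.
have size_take_le : size (take (uphalf (size s)) s) <= n.
  by rewrite size_take; case: ifP => ?; lia.
have size_drop_le : size (drop (uphalf (size s)) s) <= n.
  by rewrite size_drop; lia.
by congr (_ :: _ ++ _); apply: internal_vertices_aux_fuel.
Qed.

Lemma internal_vertices_cat a b : 0 < size a -> size a = size b ->
  internal_vertices (a ++ b) = (a, b) :: internal_vertices a ++ internal_vertices b.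
Proof.
move=> a_gt0 eq_ab.
have half_ab : uphalf (size (a ++ b)) = size a.
  by rewrite size_cat -eq_ab addnn uphalf_double.
rewrite internal_vertices_split; last by rewrite size_cat; lia.
by rewrite half_ab take_size_cat ?drop_size_cat.
Qed.

Lemma foldr_Rplus_cat (l1 l2 : seq R) :
  foldr Rplus 0%R (l1 ++ l2) = (foldr Rplus 0%R l1 + foldr Rplus 0%R l2)%R.
Proof. by elim: l1 => /= [|x l ->]; ring. Qed.

Lemma IB_cat a b : 0 < size a -> size a = size b ->
  IB (a ++ b) = IB_v (a, b) + IB a + IB b.
Proof. by move=> *; rewrite /IB internal_vertices_cat //= map_cat sumn_cat addnA. Qed.

Lemma LIB_cat a b : 0 < size a -> size a = size b ->
  LIB (a ++ b) = (LIB_v (a, b) + LIB a + LIB b)%R.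
Proof.
by move=> *; rewrite /LIB internal_vertices_cat //= map_cat foldr_Rplus_cat Rplus_assoc.
Qed.

Lemma ln2_gt0 : (0 < ln 2)%R.
Proof. by rewrite -ln_1; apply: ln_increasing; lra. Qed.

Lemma lg_le x y : (0 < x)%R -> (x <= y)%R -> (lg x <= lg y)%R.
Proof.
move=> x_gt0 le_xy; rewrite /lg /Rdiv.
apply: Rmult_le_compat_r; first by left; apply/Rinv_0_lt_compat/ln2_gt0.
case: (Rle_lt_or_eq_dec _ _ le_xy) => [lt_xy | ->]; last exact: Rle_refl.
by left; apply: ln_increasing.
Qed.

Lemma lg_INR_ge0 n : 0 < n -> (0 <= lg (INR n))%R.
Proof.
move=> n_gt0; have -> : 0%R = lg 1 by rewrite /lg ln_1 /Rdiv Rmult_0_l.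
by apply: lg_le; [lra | apply: (le_INR 1); apply/leP].
Qed.

Lemma foldr_Rplus_ge0 (T : Type) (F : T -> R) (s : seq T) :
  (forall x, 0 <= F x)%R -> (0 <= foldr Rplus 0 [seq F x | x <- s])%R.
Proof. by move=> F_ge0; elim: s => [|x s IH] /=; [lra | have := F_ge0 x; lra]. Qed.

Lemma LIB_ge0 s : (0 <= LIB s)%R.
Proof.
apply: foldr_Rplus_ge0 => v; apply: foldr_Rplus_ge0 => r.
exact: lg_INR_ge0.
Qed.

Section MonotoneRelabelling.

Variable f : nat -> nat.
Hypothesis f_mono : {mono f : x y / x <= y}.

Lemma internal_vertices_aux_map fuel s :
  internal_vertices_aux fuel (map f s) =
  [seq (map f v.1, map f v.2) | v <- internal_vertices_aux fuel s].
Proof.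
elim: fuel s => [|fuel IH] s //=; rewrite size_map; case: ifP => // _.
by rewrite -map_take -map_drop !IH /= map_cat.
Qed.

Lemma labels_map a b : labels (map f a, map f b) = labels (a, b).
Proof.
rewrite /labels /= -map_cat -(map_sort f_mono) -map_comp.
by apply: eq_map => k /=; rewrite (mem_map (incn_inj f_mono)).
Qed.

Lemma IB_map s : IB (map f s) = IB s.
Proof.
rewrite /IB /internal_vertices size_map internal_vertices_aux_map -map_comp.
by congr sumn; apply: eq_map => -[a b]; rewrite /= /IB_v labels_map.
Qed.

Lemma LIB_map s : LIB (map f s) = LIB s.
Proof.
rewrite /LIB /internal_vertices size_map internal_vertices_aux_map -map_comp.
by congr foldr; apply: eq_map => -[a b]; rewrite /= /LIB_v labels_map.
Qed.

End MonotoneRelabelling.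

Fixpoint alt_blocks (b : bool) (m c : nat) : seq bool :=
  if c is c'.+1 then nseq m b ++ alt_blocks (~~ b) m c' else [::].

Lemma alt_blocks_iota m a c : 0 < m ->
  [seq odd (k %/ m) | k <- iota (a * m) (c * m)] = alt_blocks (odd a) m c.
Proof.
move=> m_gt0; elim: c a => [|c IH] a //=.
rewrite mulSn iotaD map_cat -mulSnr IH /=; congr (_ ++ _).
rewrite -[in RHS](size_iota (a * m) m) -(size_map (fun k => odd (k %/ m))).
apply/all_pred1P/allP => x /mapP [k]; rewrite mem_iota => /andP [k_ge k_lt] ->.
rewrite -(subnKC k_ge) divnMDl // divn_small ?addn0 /= ?eqxx //; lia.
Qed.

Lemma runs_aux_nseq b k j t : runs_aux b k (nseq j b ++ t) = runs_aux b (k + j) t.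
Proof. by elim: j k => [|j IH] k /=; rewrite ?addn0 // eqxx IH addnS. Qed.

Lemma runs_aux_alt_blocks b k m c : 0 < m ->
  runs_aux b k (alt_blocks (~~ b) m c) = k :: nseq c m.
Proof.
case: m => // m _; elim: c b k => [|c IH] b k //=.
by rewrite ifN ?runs_aux_nseq ?IH ?add1n //; case: b.
Qed.

Lemma runs_alt_blocks b m c : 0 < m -> runs (alt_blocks b m c.+1) = nseq c.+1 m.
Proof. by case: m => // m _ /=; rewrite runs_aux_nseq add1n runs_aux_alt_blocks. Qed.

Lemma switches_nseq b j t : switches (b :: nseq j b ++ t) = switches (b :: t).
Proof. by elim: j => //= j ->; rewrite eqxx. Qed.

Lemma switches_cons_cons x y t : switches [:: x, y & t] = (x != y) + switches (y :: t).
Proof. by []. Qed.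

Lemma switches_cons_alt_blocks b m c : 0 < m ->
  switches (b :: alt_blocks (~~ b) m c) = c.
Proof.
case: m => // m _; elim: c b => [|c IH] b //.
rewrite [alt_blocks _ _ _]/= switches_cons_cons switches_nseq IH.
by case: b.
Qed.

Lemma switches_alt_blocks b m c : 0 < m -> switches (alt_blocks b m c.+1) = c.
Proof.
case: m => // m _.
by rewrite [alt_blocks _ _ _]/= switches_nseq switches_cons_alt_blocks.
Qed.

(* Inserts the bit [b] at position [i] of the binary expansion of [k]
   (see [insert_bitE]); written as a sum of nondecreasing functions of [k]. *)
Definition insert_bit (i : nat) (b : bool) (k : nat) : nat :=
  k + k %/ 2 ^ i * 2 ^ i + b * 2 ^ i.

Lemma insert_bit_mono i b : {mono insert_bit i b : x y / x <= y}.
Proof.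
apply: leq_mono => x y lt_xy; rewrite /insert_bit.
have := leq_mul (leq_div2r (2 ^ i) (ltnW lt_xy)) (leqnn (2 ^ i)); lia.
Qed.

Lemma insert_bitE i b k : insert_bit i b k = ((k %/ 2 ^ i).*2 + b) * 2 ^ i + k %% 2 ^ i.
Proof. by rewrite /insert_bit {1}(divn_eq k (2 ^ i)) -addnn !mulnDl; lia. Qed.

Lemma odd_insert_bit_div i b k : odd (insert_bit i b k %/ 2 ^ i) = b.
Proof.
have pow_gt0 : 0 < 2 ^ i by rewrite expn_gt0.
rewrite insert_bitE divnMDl // (divn_small (ltn_pmod k pow_gt0)) addn0.
by rewrite oddD odd_double; case: b.
Qed.

Lemma insert_bit_lt i b k d : i <= d -> k < 2 ^ d -> insert_bit i b k < 2 ^ d.+1.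
Proof.
move=> le_id k_lt; rewrite insert_bitE.
have pow_gt0 : 0 < 2 ^ i by rewrite expn_gt0.
have pow_split : 2 ^ d = 2 ^ (d - i) * 2 ^ i by rewrite -expnD subnK.
have q_lt : k %/ 2 ^ i < 2 ^ (d - i) by rewrite ltn_divLR // -pow_split.
have r_lt := ltn_pmod k pow_gt0.
have hi_lt : (k %/ 2 ^ i).*2 + b < (2 ^ (d - i)).*2 by case: b; lia.
have := leq_mul hi_lt (leqnn (2 ^ i)).
rewrite expnS pow_split -!muln2; nia.
Qed.

Fixpoint bitperm (t d : nat) : seq nat :=
  if d is d'.+1 then
    map (insert_bit (minn t d') false) (bitperm t d') ++
    map (insert_bit (minn t d') true) (bitperm t d')
  else [:: 0].

Lemma size_bitperm t d : size (bitperm t d) = 2 ^ d.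
Proof. by elim: d => //= d IH; rewrite size_cat !size_map IH expnS mul2n addnn. Qed.

Lemma perm_bitperm t d : perm_eq (bitperm t d) (iota 0 (2 ^ d)).
Proof.
elim: d => [|d IH] //=; set i := minn t d.
have le_id : i <= d by rewrite geq_minr.
have lt_pow k : k \in bitperm t d -> k < 2 ^ d by rewrite (perm_mem IH) mem_iota.
have uniq_d : uniq (bitperm t d) by rewrite (perm_uniq IH) iota_uniq.
set s := _ ++ _.
have uniq_s : uniq s.
  rewrite cat_uniq !map_inj_uniq ?uniq_d /=; try exact: incn_inj (insert_bit_mono _ _).
  rewrite andbT; apply/hasPn => _ /mapP [k _ ->]; apply/mapP => -[k' _].
  by move/(congr1 (fun x => odd (x %/ 2 ^ i))); rewrite !odd_insert_bit_div.
have sub_s : {subset s <= iota 0 (2 ^ d.+1)}.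
  move=> x; rewrite mem_cat mem_iota => /orP [] /mapP [k /lt_pow k_lt ->];
  exact: insert_bit_lt.
have size_s : size (iota 0 (2 ^ d.+1)) <= size s.
  by rewrite size_iota size_cat !size_map size_bitperm addnn -mul2n -expnS.
have [_ mem_s] := uniq_min_size uniq_s sub_s size_s.
exact: uniq_perm uniq_s (iota_uniq _ _) mem_s.
Qed.

Lemma labels_bitperm_root t d (i := minn t d) :
  labels (map (insert_bit i false) (bitperm t d), map (insert_bit i true) (bitperm t d))
  = alt_blocks false (2 ^ i) (2 ^ (d.+1 - i)).
Proof.
have pow_gt0 : 0 < 2 ^ i by rewrite expn_gt0.
have pow_split : 2 ^ d.+1 = 2 ^ (d.+1 - i) * 2 ^ i.
  by rewrite -expnD subnK // (leq_trans (geq_minr t d)).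
have perm_root := perm_bitperm t d.+1.
have sort_root : sort leq (bitperm t d.+1) = iota 0 (2 ^ d.+1).
  apply: (sorted_eq leq_trans anti_leq).
  - exact: (sort_sorted leq_total).
  - exact: iota_sorted.
  - by rewrite perm_sort.
rewrite /labels -[_ ++ _]/(bitperm t d.+1) sort_root.
rewrite -(alt_blocks_iota _ 0 _ pow_gt0) mul0n -pow_split.
have odd_right x : x \in map (insert_bit i true) (bitperm t d) -> odd (x %/ 2 ^ i).
  by case/mapP=> k _ ->; rewrite odd_insert_bit_div.
apply/eq_in_map => x; rewrite -(perm_mem perm_root) /= mem_cat.
case/orP=> [/mapP [k _ ->] | /[dup] /odd_right -> ->] //.
rewrite odd_insert_bit_div; apply/negbTE/negP => /odd_right.
by rewrite odd_insert_bit_div.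
Qed.

Lemma foldr_Rplus_nseq c x : foldr Rplus 0%R (nseq c x) = (INR c * x)%R.
Proof. by elim: c => [|c IH]; rewrite ?S_INR /= ?IH; ring. Qed.

Lemma IB_bitperm_succ t d :
  (IB (bitperm t d.+1)).+1 = 2 ^ (d.+1 - minn t d) + 2 * IB (bitperm t d).
Proof.
rewrite [bitperm _ _.+1]/= IB_cat ?size_map ?size_bitperm ?expn_gt0 //.
rewrite !IB_map; try exact: insert_bit_mono.
rewrite /IB_v labels_bitperm_root.
case: (2 ^ (d.+1 - _)) (expn_gt0 2 (d.+1 - minn t d)) => // c _.
by rewrite switches_alt_blocks ?expn_gt0 //; lia.
Qed.

Lemma LIB_bitperm_succ t d :
  LIB (bitperm t d.+1) =
  (INR (2 ^ (d.+1 - minn t d)) * lg (INR (2 ^ minn t d).+1) + 2 * LIB (bitperm t d))%R.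
Proof.
rewrite [bitperm _ _.+1]/= LIB_cat ?size_map ?size_bitperm ?expn_gt0 //.
rewrite !LIB_map; try exact: insert_bit_mono.
rewrite /LIB_v labels_bitperm_root.
case: (2 ^ (d.+1 - _)) (expn_gt0 2 (d.+1 - minn t d)) => // c _.
by rewrite runs_alt_blocks ?expn_gt0 // map_nseq foldr_Rplus_nseq; ring.
Qed.

Lemma IB_bitperm_small t d : d <= t -> (IB (bitperm t d)).+1 = 2 ^ d.
Proof.
elim: d => [|d IH] le_dt //.
rewrite IB_bitperm_succ (minn_idPr (ltnW le_dt)) subSnn expn1 expnS -IH 1?ltnW //.
lia.
Qed.

Lemma IB_bitperm_large t e :
  IB (bitperm t (t + e)) + 2 ^ e.+1 = e * 2 ^ e + 2 ^ (t + e) + 1.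
Proof.
elim: e => [|e IH]; first by have := IB_bitperm_small t t (leqnn t); rewrite addn0; lia.
have := IB_bitperm_succ t (t + e).
rewrite (minn_idPl (leq_addr e t)) -addnS addKn.
have -> : e.+1 * 2 ^ e.+1 = 2 * (e * 2 ^ e) + 2 ^ e.+1 by rewrite mulSn expnS mulnCA addnC.
have -> : 2 ^ (t + e.+1) = 2 * 2 ^ (t + e) by rewrite addnS expnS.
rewrite [2 ^ e.+2]expnS; lia.
Qed.

Lemma INR_exp2 k : INR (2 ^ k) = (2 ^ k)%R.
Proof. by elim: k => [|k IH] //; rewrite expnS mult_INR IH. Qed.

Lemma lg_exp2 k : lg (INR (2 ^ k)) = INR k.
Proof. by rewrite INR_exp2 /lg ln_pow; [field; have := ln2_gt0 | ]; lra. Qed.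

Lemma lg_INR_bounds k n : 2 ^ k <= n <= 2 ^ k.+1 -> (INR k <= lg (INR n) <= INR k + 1)%R.
Proof.
case/andP=> lo hi; have pow_gt0 : (0 < INR (2 ^ k))%R by apply/lt_0_INR/ltP/expn_gt0.
split; first by rewrite -(lg_exp2 k); apply: lg_le => //; apply/le_INR/leP.
rewrite -S_INR -(lg_exp2 k.+1); apply: lg_le; last exact/le_INR/leP.
by apply: (Rlt_le_trans _ _ _ pow_gt0); apply/le_INR/leP.
Qed.

Lemma lg_exp2_succ_bounds k : (INR k <= lg (INR (2 ^ k).+1) <= INR k + 1)%R.
Proof.
by apply: lg_INR_bounds; rewrite leqnSn expnS mul2n -addnn -addn1 leq_add2l expn_gt0.
Qed.

Lemma LIB_bitperm_small t d : d <= t ->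
  (LIB (bitperm t d) <= 4 * INR (2 ^ d) - 2 * (INR d + 2))%R.
Proof.
elim: d => [|d IH] le_dt; first by rewrite /LIB /=; lra.
rewrite LIB_bitperm_succ (minn_idPr (ltnW le_dt)) subSnn expn1 expnS mult_INR.
rewrite [INR d.+1]S_INR (_ : INR 2 = 2%R) //.
have := lg_exp2_succ_bounds d; have := IH (ltnW le_dt); lra.
Qed.

Lemma LIB_bitperm_large t e :
  LIB (bitperm t (t + e)) =
  (INR (2 ^ e) * LIB (bitperm t t) + INR e * INR (2 ^ e) * lg (INR (2 ^ t).+1))%R.
Proof.
elim: e => [|e IH]; first by rewrite addn0 /=; ring.
rewrite addnS LIB_bitperm_succ (minn_idPl (leq_addr e t)) -addnS addKn IH.
by rewrite expnS mult_INR [INR e.+1]S_INR (_ : INR 2 = 2%R) //; ring.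
Qed.

Lemma IB_bitperm_large_bounds t e : 0 < t -> 2 ^ t <= e ->
  e * 2 ^ e <= IB (bitperm t (t + e)) <= 3 * (e * 2 ^ e).
Proof.
move=> t_gt0 le_pow_e; have := IB_bitperm_large t e.
rewrite expnS expnD.
have two_le_pow : 2 <= 2 ^ t by rewrite -{1}(expn1 2) leq_exp2l.
have := leq_mul two_le_pow (leqnn (2 ^ e)).
have := leq_mul le_pow_e (leqnn (2 ^ e)).
have := muln_gt0 e (2 ^ e); rewrite expn_gt0 (leq_trans (expn_gt0 2 t) le_pow_e).
lia.
Qed.

Lemma LIB_bitperm_large_bounds t e : 2 ^ t <= e ->
  (INR t * INR (e * 2 ^ e) <= LIB (bitperm t (t + e)) <= (INR t + 5) * INR (e * 2 ^ e))%R.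
Proof.
move=> le_pow_e; rewrite LIB_bitperm_large mult_INR.
have L0_ge0 := LIB_ge0 (bitperm t t).
have L0_le : (LIB (bitperm t t) <= 4 * INR e)%R.
  have := LIB_bitperm_small t t (leqnn t); have : (INR (2 ^ t) <= INR e)%R by apply/le_INR/leP.
  have := pos_INR t; lra.
have [lg_lo lg_hi] := lg_exp2_succ_bounds t.
have X_ge0 := pos_INR (2 ^ e).
have A_ge0 : (0 <= INR e * INR (2 ^ e))%R by apply: Rmult_le_pos; [exact: pos_INR | ].
have := Rmult_le_pos _ _ X_ge0 L0_ge0.
have := Rmult_le_compat_l _ _ _ X_ge0 L0_le.
have := Rmult_le_compat_l _ _ _ A_ge0 lg_lo.
have := Rmult_le_compat_l _ _ _ A_ge0 lg_hi.
split; lra.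
Qed.

Lemma ratio_within_constants (T A lgD ib lib : R) :
  (1 <= T)%R -> (0 <= A)%R -> (2 * T <= lgD <= 2 * T + 1)%R ->
  (A <= ib <= 3 * A)%R -> (T * A <= lib <= (T + 5) * A)%R ->
  (1/16 * lgD * ib <= lib)%R /\ (lib <= 3 * lgD * ib)%R.
Proof.
move=> T_ge1 A_ge0 [lgD_lo lgD_hi] [ib_lo ib_hi] [lib_lo lib_hi].
have : (lgD * ib <= (2 * T + 1) * (3 * A))%R by apply: Rmult_le_compat; lra.
have : (2 * T * A <= lgD * ib)%R by apply: Rmult_le_compat; lra.
split; nra.
Qed.

Theorem lemma3 :
  exists c1 c2 : R, (0 < c1)%R /\ (0 < c2)%R /\
    forall N : nat, exists (n : nat) (pi : seq nat),
      (N <= n)%N /\ is_perm_of n pi /\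
      (c1 * lg (lg (INR n)) * INR (IB pi) <= LIB pi)%R /\
      (LIB pi <= c2 * lg (lg (INR n)) * INR (IB pi))%R.
Proof.
exists (1/16)%R, 3%R; do 2![split; first lra] => N.
set t := N.+1; set e := 2 ^ (2 * t); set D := t + e.
have le_pow_e : 2 ^ t <= e by rewrite leq_exp2l //; lia.
have t_lt_pow := ltn_expl t (ltnSn 1).
exists (2 ^ D), (bitperm t D); split; first by have := ltn_expl D (ltnSn 1); lia.
split; first exact: perm_bitperm.
rewrite lg_exp2; apply: (ratio_within_constants (INR t) (INR (e * 2 ^ e))).
- by apply: (le_INR 1); apply/leP.
- exact: pos_INR.
- have -> : (2 * INR t = INR (2 * t))%R by rewrite mult_INR.
  rewrite -S_INR.
  by apply: lg_INR_bounds; rewrite leq_addl expnS mul2n -addnn leq_add2r; lia.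
- have /andP [IB_lo IB_hi] := IB_bitperm_large_bounds t e (ltn0Sn N) le_pow_e.
  have -> : (3 * INR (e * 2 ^ e) = INR (3 * (e * 2 ^ e)))%R.
    by rewrite !mult_INR; congr (_ * _)%R; simpl; ring.
  by split; apply/le_INR/leP.
- exact: LIB_bitperm_large_bounds.
Qed.
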